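(* Let $b>1$, $p\ge1$, $R\subseteq\{0,\ldots,p-1\}$, let $k$ be the greatest divisor of $p$ coprime with $b$ and $d=p/k$. A state of $\mathcal{A}_{R,p}$ is a multiple of $d$ if and only if it belongs to a $0$-circuit.
   Context: $A_b=\{0,\ldots,b-1\}$. $\mathcal{A}_{R,p}$: complete deterministic automaton over $A_b$ with states $\{0,\ldots,p-1\}$, initial $0$, final $R$, transitions $n\xrightarrow{a}(nb+a)\bmod p$. A $0$-circuit is a circuit all of whose transitions are labelled by the digit $0$. *)

From mathcomp Require Import all_boot.
Set Implicit Arguments. Unset Strict Implicit. Unset Printing Implicit Defensive.

(* The automaton A_{R,p} over the alphabet A_b = {0,...,b-1}:
   states {0,...,p-1}, initial state 0, final states R,
   transition n --a--> (n*b + a) mod p. *)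
Definition trans (b p n a : nat) : nat := (n * b + a) %% p.

Definition run (b p s : nat) (w : seq nat) : nat := foldl (trans b p) s w.

Definition on_zero_circuit (b p s : nat) : Prop :=
  exists w : seq nat, [/\ w != [::], all (fun a => a == 0) w & run b p s w = s].

Definition coprime_part (b p : nat) : nat :=
  \max_(k < p.+1 | (k %| p) && coprime k b) k.

From mathcomp Require Import all_boot cyclic.

Set Implicit Arguments.
Unset Strict Implicit.
Unset Printing Implicit Defensive.

(* A 0-circuit through s of length n exists iff p divides s (b^n - 1).
   With k the b-coprime part of p and d = p/k: if d | s, take n = totient k,
   so that k | b^n - 1 by Euler. Conversely, p | s (b^n - 1) forces
   p / gcd(p, s) to divide b^n - 1, hence to be coprime with b, hence to
   divide k, which makes d divide gcd(p, s). *)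

Lemma run_nseq0 b p s n : s < p -> run b p s (nseq n 0) = s * b ^ n %% p.
Proof.
elim: n s => [|n IHn] s lt_sp; first by rewrite muln1 modn_small.
rewrite /run /= -/(run _ _ _ _) /trans addn0 IHn ?ltn_pmod ?(leq_ltn_trans _ lt_sp) //.
by rewrite modnMml expnS mulnA.
Qed.

Lemma zero_circuitP b p s : 0 < b -> s < p ->
  on_zero_circuit b p s <-> exists2 n, 0 < n & p %| s * (b ^ n).-1.
Proof.
move=> b_gt0 lt_sp.
have modE n : (s * b ^ n %% p == s) = (p %| s * (b ^ n).-1).
  rewrite -{2}(modn_small lt_sp) eqn_mod_dvd ?leq_pmulr ?expn_gt0 ?b_gt0 //.
  by rewrite -{2}(muln1 s) -mulnBr subn1.
split=> [[w [w_nil /all_pred1P w0]] | [n n_gt0 dvd_p]].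
  rewrite w0 run_nseq0 // => /eqP; rewrite modE.
  by exists (size w); rewrite // lt0n size_eq0.
exists (nseq n 0); split; last by apply/eqP; rewrite run_nseq0 // modE.
  by rewrite -size_eq0 size_nseq -lt0n.
by apply/all_pred1P; rewrite size_nseq.
Qed.

Lemma dvdn_predX_totient a n : coprime a n -> n %| (a ^ totient n).-1.
Proof.
case: a => [|a] co_an; first by rewrite /coprime gcd0n in co_an; rewrite (eqP co_an).
by rewrite -subn1 -eqn_mod_dvd ?expn_gt0 //; apply/eqP; apply: Euler_exp_totient.
Qed.

Lemma coprime_predX b n : 0 < b -> 0 < n -> coprime (b ^ n).-1 b.
Proof.
move=> b_gt0 n_gt0.
by rewrite -(coprime_pexpr _ _ n_gt0) coprimePn // expn_gt0 b_gt0.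
Qed.

Lemma dvdn_div_gcdn p s m : 0 < p -> p %| s * m -> p %/ gcdn p s %| m.
Proof.
move=> p_gt0 dvd_p; have g_gt0 : 0 < gcdn p s by rewrite gcdn_gt0 p_gt0.
rewrite -(dvdn_pmul2r g_gt0) divnK ?dvdn_gcdl //.
by rewrite mulnC muln_gcdl dvdn_gcd dvdn_mulr.
Qed.

Section CoprimePart.

Variables b p : nat.
Hypothesis p_gt0 : 0 < p.

Local Notation k := (coprime_part b p).

Lemma coprime_partP : (k %| p) && coprime k b.
Proof.
pose A := [pred i : 'I_p.+1 | (i %| p) && coprime i b].
have A1 : (inord 1 : 'I_p.+1) \in A by rewrite inE inordK ?dvd1n ?coprime1n.
have [|i0 Ai0 max_i0] := @eq_bigmax_cond _ A (fun i => nat_of_ord i).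
  by apply/card_gt0P; exists (inord 1).
by rewrite [coprime_part b p](_ : _ = nat_of_ord i0) // -max_i0.
Qed.

Lemma coprime_part_dvd : k %| p.
Proof. by case/andP: coprime_partP. Qed.

Lemma coprime_part_coprime : coprime k b.
Proof. by case/andP: coprime_partP. Qed.

Lemma coprime_part_gt0 : 0 < k.
Proof. exact: dvdn_gt0 p_gt0 coprime_part_dvd. Qed.

Lemma leq_coprime_part j : j %| p -> coprime j b -> j <= k.
Proof.
move=> dvd_jp co_jb; have lt_jp1 : j < p.+1 by rewrite ltnS dvdn_leq.
by apply: (@leq_bigmax_cond _ _ val (Ordinal lt_jp1)); rewrite /= dvd_jp.
Qed.

(* The lcm of two b-coprime divisors of p is again one, so maximality of k
   upgrades to divisibility. *)
Lemma dvdn_coprime_part j : j %| p -> coprime j b -> j %| k.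
Proof.
move=> dvd_jp co_jb.
have dvd_lp : lcmn j k %| p by rewrite dvdn_lcm dvd_jp coprime_part_dvd.
have co_lb : coprime (lcmn j k) b.
  apply: (@coprime_dvdl _ (j * k)); first by rewrite dvdn_lcm dvdn_mulr ?dvdn_mull.
  by rewrite coprimeMl co_jb coprime_part_coprime.
have /eqP lcm_jk : lcmn j k == k.
  by rewrite eqn_leq leq_coprime_part // dvdn_leq ?(dvdn_gt0 p_gt0 dvd_lp) ?dvdn_lcmr.
by rewrite -lcm_jk dvdn_lcml.
Qed.

Lemma dvdn_mul_predX_totient s : p %/ k %| s -> p %| s * (b ^ totient k).-1.
Proof.
move=> dvd_ds; rewrite -[X in X %| _](divnK coprime_part_dvd); apply: dvdn_mul => //.
by apply: dvdn_predX_totient; rewrite coprime_sym coprime_part_coprime.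
Qed.

Lemma divn_coprime_part_dvd s m : coprime m b -> p %| s * m -> p %/ k %| s.
Proof.
move=> co_mb dvd_p; set g := gcdn p s; set j := p %/ g.
have dvd_jm : j %| m by apply: dvdn_div_gcdn.
have dvd_jp : j %| p by apply: dvdn_div; apply: dvdn_gcdl.
have dvd_jk : j %| k by apply: dvdn_coprime_part => //; apply: coprime_dvdl dvd_jm co_mb.
apply: dvdn_trans (dvdn_gcdr p s); rewrite -/g.
rewrite -(dvdn_pmul2r (dvdn_gt0 p_gt0 dvd_jp)) [g * j]mulnC divnK ?dvdn_gcdl //.
by rewrite -[X in _ %| X](divnK coprime_part_dvd); apply: dvdn_mul.
Qed.

End CoprimePart.

Theorem lemma22 (b p : nat) (R : pred nat) :
  1 < b -> 1 <= p -> (forall r, R r -> r < p) ->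
  let k := coprime_part b p in
  let d := p %/ k in
  forall s : nat, s < p -> (d %| s) <-> on_zero_circuit b p s.
Proof.
move=> b_gt1 p_gt0 _ /= s lt_sp; have b_gt0 : 0 < b := ltnW b_gt1.
have circuitE := zero_circuitP b_gt0 lt_sp.
split=> [dvd_ds | /circuitE[n n_gt0 dvd_p]].
  apply/circuitE; exists (totient (coprime_part b p)).
    by rewrite totient_gt0 coprime_part_gt0.
  exact: dvdn_mul_predX_totient.
exact (divn_coprime_part_dvd p_gt0 (coprime_predX b_gt0 n_gt0) dvd_p).
Qed.
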